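(* For every positive integer $n$: (i) $b^{2}_{3,4}(6n+4)\equiv 0\pmod 2$; (ii) $b^{2}_{3,4}(6n+2)\equiv b^{3}_{3}(n)\pmod 2$; (iii) $b^{2}_{3,4}(12n+6)\equiv 0\pmod 2$; (iv) $b^{2}_{3,4}(12n)\equiv p(n)\pmod 2$.
   Context: For integers $r\ge1$ write $f_r=\prod_{j\ge1}(1-q^{rj})$. $b^{2}_{3,4}(n)$ is the number of $2$-colored partitions of $n$ into parts not divisible by $3$ or $4$, i.e. $\sum_{n\ge0}b^2_{3,4}(n)q^n=\dfrac{f_3^2f_4^2}{f_1^2f_{12}^2}$. $b^{3}_{3}(n)$ is the number of $3$-colored partitions of $n$ into parts not divisible by $3$, i.e. $\sum_{n\ge0}b^3_3(n)q^n=\dfrac{f_3^3}{f_1^3}$. $p(n)$ is the ordinary partition function, $\sum_{n\ge0}p(n)q^n=1/f_1$. *)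

From mathcomp Require Import all_boot all_order all_algebra.
Set Implicit Arguments. Unset Strict Implicit. Unset Printing Implicit Defensive.
Import GRing.Theory.
Local Open Scope ring_scope.

(* Truncations (exact in all coefficients of degree <= n) of the q-series
   f_r = prod_{j>=1} (1 - q^{rj}) and 1/f_r = prod_{j>=1} sum_{k>=0} q^{rjk},
   as integer polynomials. *)
Definition f_trunc (r n : nat) : {poly int} :=
  \prod_(j < n) (1 - 'X^(r * j.+1)).
Definition finv_trunc (r n : nat) : {poly int} :=
  \prod_(j < n) \sum_(k < n.+1) 'X^(r * j.+1 * k).

Definition b2_34 (n : nat) : int :=
  (f_trunc 3 n ^+ 2 * f_trunc 4 n ^+ 2 *
   finv_trunc 1 n ^+ 2 * finv_trunc 12 n ^+ 2)`_n.

Definition b3_3 (n : nat) : int :=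
  (f_trunc 3 n ^+ 3 * finv_trunc 1 n ^+ 3)`_n.

Definition partp (n : nat) : int := (finv_trunc 1 n)`_n.

From mathcomp Require Import all_boot all_order all_algebra.
From mathcomp Require Import zify ring finfield.
Set Implicit Arguments. Unset Strict Implicit. Unset Printing Implicit Defensive.
Import GRing.Theory.
Local Open Scope ring_scope.

(* Modulo 2 we work with polynomials over F_2 up to congruence modulo X^N.
   There f_4 = f_1^4 and f_12 = f_3^4, so the generating function of b^2_{3,4}
   is (f_1^3 / f_3^3)(q^2).  Jacobi's identity gives f_1^3 = sum_(k >= 0)
   q^(k(k+1)/2) and Euler's pentagonal theorem f_1 = sum_(k in Z) q^(k(3k-1)/2);
   sorting the triangular numbers by k mod 3 yields f_1^3 = f_3 + q f_9^3.  Hence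
   f_1^3 / f_3^3 = 1 / f_6 + q (f_3^3 / f_1^3)(q^3), whose coefficients at 3n+2,
   6n+3, 3n+1 and 6n are 0, 0, b^3_3(n) and p(n).  Both identities are the cases
   s = 4 and s = 3 of the Jacobi triple product, obtained in truncated form from
   the finite q-binomial theorem. *)

Lemma double_bin2 k : (2 * 'C(k, 2) = k * k.-1)%N.
Proof. by rewrite -mul_bin_diag bin1. Qed.

Lemma bin2D m n : 'C(m + n, 2) = ('C(m, 2) + m * n + 'C(n, 2))%N.
Proof.
have := double_bin2 (m + n); have := double_bin2 m; have := double_bin2 n.
by case: m => [|m]; case: n => [|n] /=; rewrite ?addn0 ?add0n ?muln0 //; nia.
Qed.

Lemma big_ord_mul (R : Type) (idx : R) (op : Monoid.law idx) k n (F : nat -> R) :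
  \big[op/idx]_(j < k * n) F j =
  \big[op/idx]_(i < n) \big[op/idx]_(t < k) F (k * i + t)%N.
Proof.
rewrite -(big_mkord xpredT) mulnC big_nat_mul big_mkord; apply: eq_bigr => i _.
rewrite -{1}[(i * k)%N]add0n big_addn mulSn addnK big_mkord.
by apply: eq_bigr => t _; rewrite addnC mulnC.
Qed.

Section QBinomial.
Variables (R : comPzRingType) (q : R).

Fixpoint qbinom (m k : nat) : R :=
  match m, k with
  | _, 0 => 1
  | 0, _.+1 => 0
  | m'.+1, k'.+1 => qbinom m' k'.+1 + q ^+ (m' - k') * qbinom m' k'
  end.

Lemma qbinom0 m : qbinom m 0 = 1. Proof. by case: m. Qed.

Lemma qbinom_small m k : (m < k)%N -> qbinom m k = 0.
Proof.
elim: m k => [|m IHm] [|k] //= lt_mk.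
by rewrite !IHm ?mulr0 ?addr0 // ltnW.
Qed.

Lemma qbinom_qfact m k :
  qbinom m k * \prod_(i < k) (1 - q ^+ i.+1) = \prod_(i < k) (1 - q ^+ (m - i)).
Proof.
elim: m k => [|m IHm] [|k]; rewrite ?big_ord0 ?mulr1 //=.
  by rewrite mul0r big_ord_recl subn0 expr0 subrr mul0r.
rewrite mulrDl IHm big_ord_recr -mulrA [\prod_(i < k.+1) (1 - q ^+ i.+1)]big_ord_recr.
rewrite (mulrA (qbinom m k)) IHm /=.
rewrite [RHS]big_ord_recl subn0.
under [in RHS]eq_bigr do rewrite lift0 subSS.
have [le_km | lt_mk] := leqP k m; last first.
  by rewrite (bigD1 (Ordinal lt_mk)) //= subnn expr0 subrr !(mul0r, mulr0, addr0).
have -> : q ^+ m.+1 = q ^+ (m - k) * q ^+ k.+1 by rewrite -exprD addnS subnK.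
ring.
Qed.

Theorem qbinomial (y z : R) m :
  \prod_(i < m) (y + z * q ^+ i) =
  \sum_(k < m.+1) qbinom m k * q ^+ 'C(k, 2) * z ^+ k * y ^+ (m - k).
Proof.
elim: m => [|m IHm]; first by rewrite big_ord0 big_ord1 /= !expr0 !mulr1.
rewrite big_ord_recr /= IHm mulr_suml [RHS]big_ord_recl /=.
under [in RHS]eq_bigr do rewrite /bump add0n add1n subSS !mulrDl.
rewrite big_split addrA /=; under eq_bigr do rewrite mulrDr.
rewrite big_split /=; congr (_ + _).
  rewrite [in RHS]big_ord_recr /= qbinom_small // !mul0r addr0 [LHS]big_ord_recl /=.
  rewrite qbinom0 !subn0 !expr0 !mulr1 !mul1r -exprSr; congr (_ + _).
  apply: eq_bigr => -[i /= lt_im] _; rewrite /bump /= add1n -mulrA -exprSr.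
  by rewrite subnSK.
apply: eq_bigr => -[i /= le_im] _.
rewrite binS bin1 exprS exprD.
have -> : q ^+ m = q ^+ (m - i) * q ^+ i by rewrite -exprD subnK.
ring.
Qed.
End QBinomial.

Definition eqmodX (F : fieldType) (N : nat) (p q : {poly F}) := 'X^N %| p - q.

Notation "p = q %[mod 'X^ N ]" := (eqmodX N p q)
  (at level 70, q at next level, format "p  =  q  %[mod  ''X^' N ]").

Section CongruenceModXn.
Variable F : fieldType.
Implicit Types (p q r : {poly F}) (N : nat).

Lemma eqmodX_refl N p : p = p %[mod 'X^N].
Proof. by rewrite /eqmodX subrr dvdp0. Qed.

Lemma eqmodX_sym N p q : p = q %[mod 'X^N] -> q = p %[mod 'X^N].
Proof. by rewrite /eqmodX -opprB dvdpNr. Qed.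

Lemma eqmodX_trans N p q r :
  p = q %[mod 'X^N] -> q = r %[mod 'X^N] -> p = r %[mod 'X^N].
Proof. by move=> pq qr; rewrite /eqmodX -(subrKA q) dvdp_add. Qed.

Lemma eqmodX_le N N' p q : (N' <= N)%N -> p = q %[mod 'X^N] -> p = q %[mod 'X^N'].
Proof. by move/(dvdp_exp2l 'X)/dvdp_trans; apply. Qed.

Lemma eqmodXD N p q p' q' :
  p = p' %[mod 'X^N] -> q = q' %[mod 'X^N] -> p + q = p' + q' %[mod 'X^N].
Proof. by move=> pp' qq'; rewrite /eqmodX opprD addrACA dvdp_add. Qed.

Lemma eqmodXM N p q p' q' :
  p = p' %[mod 'X^N] -> q = q' %[mod 'X^N] -> p * q = p' * q' %[mod 'X^N].
Proof.
rewrite /eqmodX => pp' qq'.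
have -> : p * q - p' * q' = (p - p') * q + p' * (q - q') by ring.
by apply: dvdp_add; [apply: dvdp_mulr | apply: dvdp_mull].
Qed.

Lemma eqmodX_sum N (I : Type) (s : seq I) (f g : I -> {poly F}) :
  (forall i, f i = g i %[mod 'X^N]) ->
  \sum_(i <- s) f i = \sum_(i <- s) g i %[mod 'X^N].
Proof.
move=> fg; elim: s => [|i s IHs]; first by rewrite !big_nil eqmodX_refl.
by rewrite !big_cons eqmodXD.
Qed.

Lemma eqmodX_prod N (I : Type) (s : seq I) (f g : I -> {poly F}) :
  (forall i, f i = g i %[mod 'X^N]) ->
  \prod_(i <- s) f i = \prod_(i <- s) g i %[mod 'X^N].
Proof.
move=> fg; elim: s => [|i s IHs]; first by rewrite !big_nil eqmodX_refl.
by rewrite !big_cons eqmodXM.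
Qed.

Lemma eqmodXX N p q k : p = q %[mod 'X^N] -> p ^+ k = q ^+ k %[mod 'X^N].
Proof.
move=> pq; elim: k => [|k IHk]; first by rewrite !expr0 eqmodX_refl.
by rewrite !exprS eqmodXM.
Qed.

Lemma eqmodX_Xn0 N a : (N <= a)%N -> ('X^a : {poly F}) = 0 %[mod 'X^N].
Proof. by rewrite /eqmodX subr0; apply: dvdp_exp2l. Qed.

Lemma eqmodX_1Xn N a : (N <= a)%N -> (1 + 'X^a : {poly F}) = 1 %[mod 'X^N].
Proof.
move=> le_Na; rewrite -[X in eqmodX _ _ X]addr0.
exact: eqmodXD (eqmodX_refl _ _) (eqmodX_Xn0 le_Na).
Qed.

Lemma eqmodX_mulXn N e p q :
  p = q %[mod 'X^(N - e)] -> 'X^e * p = 'X^e * q %[mod 'X^N].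
Proof.
rewrite /eqmodX -mulrBr => /(dvdp_mul (dvdpp 'X^e)); apply: dvdp_trans.
by rewrite -exprD dvdp_exp2l // -leq_subLR.
Qed.

Lemma eqmodX_comp N d p q :
  p = q %[mod 'X^N] -> p \Po 'X^d = q \Po 'X^d %[mod 'X^(d * N)].
Proof.
by move/(dvdp_comp_poly 'X^d); rewrite /eqmodX comp_polyB comp_Xn_poly exprM.
Qed.

Lemma eqmodX_coef N p q i : p = q %[mod 'X^N] -> (i < N)%N -> p`_i = q`_i.
Proof.
case/dvdpP=> r /(congr1 (coefp i)) /= + lt_iN.
by rewrite coefB coefMXn lt_iN => /eqP; rewrite subr_eq0 => /eqP.
Qed.

Lemma eqmodX_inv_uniq N p q q' :
  p * q = 1 %[mod 'X^N] -> p * q' = 1 %[mod 'X^N] -> q = q' %[mod 'X^N].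
Proof.
move=> pq1 pq'1; apply: (@eqmodX_trans _ _ (q * (p * q'))).
  rewrite -[q in eqmodX _ q _]mulr1.
  exact: eqmodXM (eqmodX_refl _ _) (eqmodX_sym pq'1).
rewrite mulrA (mulrC q) -[q' in eqmodX _ _ q']mul1r.
exact: eqmodXM pq1 (eqmodX_refl _ _).
Qed.

End CongruenceModXn.

Lemma pchar2_polyF2 : (2 \in [pchar {poly 'F_2}])%N.
Proof. by rewrite pchar_poly; apply: pchar_Fp. Qed.

Lemma sqr_polyF2 (p : {poly 'F_2}) : p ^+ 2 = p \Po 'X^2.
Proof.
elim/poly_ind: p => [|p c IHp]; first by rewrite expr0n comp_poly0.
rewrite sqrrD mulrn_pchar ?addr0 ?pchar2_polyF2 // exprMn IHp.
rewrite comp_polyD comp_polyM comp_polyX comp_polyC.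
by rewrite -polyC_exp -[c in RHS]expf_card card_Fp.
Qed.

Definition fpoly (r M : nat) : {poly 'F_2} := \prod_(j < M) (1 + 'X^(r * j.+1)).

Definition finvpoly (r M : nat) : {poly 'F_2} :=
  \prod_(j < M) \sum_(k < M.+1) 'X^(r * j.+1 * k).

Lemma map_f_trunc r M : map_poly intr (f_trunc r M) = fpoly r M.
Proof.
rewrite rmorph_prod; apply: eq_bigr => j _.
by rewrite rmorphB rmorph1 /= map_polyXn (oppr_pchar2 pchar2_polyF2).
Qed.

Lemma map_finv_trunc r M : map_poly intr (finv_trunc r M) = finvpoly r M.
Proof.
rewrite rmorph_prod; apply: eq_bigr => j _.
by rewrite rmorph_sum; apply: eq_bigr => k _; rewrite /= map_polyXn.
Qed.

Lemma fpoly_comp r d M : fpoly r M \Po 'X^d = fpoly (r * d) M.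
Proof.
rewrite rmorph_prod; apply: eq_bigr => j _.
by rewrite rmorphD rmorph1 /= comp_Xn_poly -exprM mulnCA mulnA.
Qed.

Lemma finvpoly_comp r d M : finvpoly r M \Po 'X^d = finvpoly (r * d) M.
Proof.
rewrite rmorph_prod; apply: eq_bigr => j _; rewrite rmorph_sum.
by apply: eq_bigr => k _; rewrite /= comp_Xn_poly -exprM; congr 'X^_; lia.
Qed.

Lemma fpoly_sqr r M : fpoly r M ^+ 2 = fpoly (r * 2) M.
Proof. by rewrite sqr_polyF2 fpoly_comp. Qed.

Lemma finvpoly_sqr r M : finvpoly r M ^+ 2 = finvpoly (r * 2) M.
Proof. by rewrite sqr_polyF2 finvpoly_comp. Qed.

Lemma fpoly_eqmod r M M' N : (N <= r * M.+1)%N -> (N <= r * M'.+1)%N ->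
  fpoly r M = fpoly r M' %[mod 'X^N].
Proof.
wlog le_MM' : M M' / (M <= M')%N.
  move=> wlog_MM' leNM leNM'.
  have [/wlog_MM'|/ltnW/wlog_MM' ] := leqP M M'; first exact.
  by move=> /(_ leNM' leNM); apply: eqmodX_sym.
move=> leNM _; rewrite -(subnKC le_MM'); elim: (M' - M)%N => [|d IHd].
  by rewrite addn0 eqmodX_refl.
rewrite addnS [fpoly r _.+1]/fpoly big_ord_recr /= -[fpoly r M]mulr1.
apply: eqmodXM IHd _; apply/eqmodX_sym/eqmodX_1Xn.
by apply: leq_trans leNM _; rewrite leq_mul2l ltnS leq_addr orbT.
Qed.

Lemma geom_polyF2 a n :
  (1 + 'X^a) * \sum_(k < n) 'X^(a * k) = 1 + 'X^(a * n) :> {poly 'F_2}.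
Proof.
have := subrX1 ('X^a : {poly 'F_2}) n; rewrite !(oppr_pchar2 pchar2_polyF2) => geom.
rewrite addrC [RHS]addrC exprM geom; congr (_ * _).
by apply: eq_bigr => k _; rewrite exprM.
Qed.

Lemma fpoly_finvpoly r M : (0 < r)%N -> fpoly r M * finvpoly r M = 1 %[mod 'X^M.+1].
Proof.
move=> r_gt0; rewrite -big_split /=.
apply: (@eqmodX_trans _ _ _ (\prod_(j < M) 1)); last by rewrite big1_eq eqmodX_refl.
apply: eqmodX_prod => j; rewrite geom_polyF2 eqmodX_1Xn //.
by rewrite leq_pmull // muln_gt0 r_gt0.
Qed.

Lemma finvpoly_eqmod r M M' N : (0 < r)%N -> (N <= M.+1)%N -> (N <= M'.+1)%N ->
  finvpoly r M = finvpoly r M' %[mod 'X^N].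
Proof.
move=> r_gt0 leNM leNM'; have leNrM k : (N <= k.+1 -> N <= r * k.+1)%N.
  by move=> /leq_trans; apply; rewrite leq_pmull.
apply: (@eqmodX_inv_uniq _ _ (fpoly r M)).
  exact: eqmodX_le leNM (fpoly_finvpoly _ r_gt0).
apply: eqmodX_trans (eqmodX_le leNM' (fpoly_finvpoly M' r_gt0)).
by apply: eqmodXM (eqmodX_refl _ _); apply: fpoly_eqmod; apply: leNrM.
Qed.

Definition jacobi_prod (s n : nat) : {poly 'F_2} :=
  \prod_(i < n) (1 + 'X^(s * i + 1)) * \prod_(i < n) (1 + 'X^(s * i + (s - 1))).

(* Mod 2 the triple product reads
     prod_i (1 + q^(si+1)) (1 + q^(si+s-1)) (1 + q^(s(i+1)))
       = sum_(k in Z) q^(s C(k,2) + k);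
   the j-th summand below collects k = -j and k = j + 1. *)
Definition jacobi_sum (s n : nat) : {poly 'F_2} :=
  \sum_(j < n) ('X^(s * 'C(j, 2) + (s - 1) * j) + 'X^(s * 'C(j.+1, 2) + j.+1)).

Section JacobiTripleProduct.
Variables (s : nat) (s_gt0 : (0 < s)%N).

Lemma qbinomial_prod_lo n :
  \prod_(i < n) ('X^(s * n - 1) + 1 * 'X^s ^+ i) =
  'X^(s * 'C(n, 2)) * \prod_(i < n) (1 + 'X^(s * i + (s - 1))) :> {poly 'F_2}.
Proof.
transitivity
  (\prod_(i < n) ('X^s ^+ i * (1 + 'X^(s * (n - i.+1) + (s - 1)))) : {poly 'F_2}).
  apply: eq_bigr => -[i /= lt_in] _; rewrite mul1r mulrDr mulr1 -!exprM -exprD addrC.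
  by congr (_ + 'X^_); move: lt_in s_gt0; rewrite -subn_gt0; nia.
rewrite big_split prodrXr /= -(big_mkord xpredT (fun i => i)) bin2_sum -exprM.
congr (_ * _); rewrite (reindex_inj rev_ord_inj) /=.
by apply: eq_bigr => -[i /= lt_in] _; rewrite subnSK // subKn // ltnW.
Qed.

Lemma qbinomial_prod_hi n :
  \prod_(i < n) ('X^(s * n - 1) + 1 * 'X^s ^+ (n + i)) =
  'X^((s * n - 1) * n) * \prod_(i < n) (1 + 'X^(s * i + 1)) :> {poly 'F_2}.
Proof.
transitivity (\prod_(i < n) ('X^(s * n - 1) * (1 + 'X^(s * i + 1))) : {poly 'F_2}).
  apply: eq_bigr => -[i /= lt_in] _; rewrite mul1r mulrDr mulr1 -!exprM -exprD.
  by congr (_ + 'X^_); move: lt_in s_gt0; nia.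
by rewrite big_split prodr_const card_ord -exprM.
Qed.

Lemma qbinomial_exponent_lo n j : (j <= n)%N ->
  (s * 'C(n - j, 2) + (s * n - 1) * (n + n - (n - j)) =
   s * 'C(n, 2) + (s * n - 1) * n + (s * 'C(j, 2) + (s - 1) * j))%N.
Proof.
case: s s_gt0 => // t _ /subnK <-; move: (n - j)%N => d.
rewrite addnK bin2D subSS subn0.
have -> : (d + j + (d + j) - d = (d + j) + j)%N by lia.
have := double_bin2 j; case: j => [|j]; first by rewrite !(addn0, muln0).
by rewrite addnS mulnS addSn subn1 /=; nia.
Qed.

Lemma qbinomial_exponent_hi n j : (j < n)%N ->
  (s * 'C(n.+1 + j, 2) + (s * n - 1) * (n + n - (n.+1 + j)) =
   s * 'C(n, 2) + (s * n - 1) * n + (s * 'C(j.+1, 2) + j.+1))%N.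
Proof.
case: s s_gt0 => // t _ /subnK <-; move: (n - j.+1)%N => d.
have -> : (d + j.+1 + (d + j.+1) - ((d + j.+1).+1 + j) = d)%N by lia.
have -> : (t.+1 * (d + j.+1) - 1 = t + t.+1 * (d + j))%N.
  by rewrite addnS mulnS addSn subn1.
by rewrite addSnnS (bin2D (d + j.+1) j.+1); nia.
Qed.

Lemma jacobi_prod_qbinomial n :
  jacobi_prod s n =
  \sum_(j < n.+1) qbinom 'X^s (n + n) (n - j) * 'X^(s * 'C(j, 2) + (s - 1) * j) +
  \sum_(j < n) qbinom 'X^s (n + n) (n.+1 + j) * 'X^(s * 'C(j.+1, 2) + j.+1).
Proof.
(* After multiplication by this monomial both sides are the q-binomial theorem
   for q = X^s, y = X^(sn-1) and z = 1. *)
apply: (@mulfI _ 'X^(s * 'C(n, 2) + (s * n - 1) * n)).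
  by rewrite monic_neq0 ?monicXn.
have -> : 'X^(s * 'C(n, 2) + (s * n - 1) * n) * jacobi_prod s n =
          \prod_(i < n + n) ('X^(s * n - 1) + 1 * 'X^s ^+ i).
  rewrite big_split_ord qbinomial_prod_lo qbinomial_prod_hi [RHS]mulrACA -exprD.
  by rewrite [X in _ * X]mulrC.
rewrite qbinomial.
rewrite -[(n + n).+1]/(n.+1 + n)%N big_split_ord /= mulrDr !mulr_sumr.
congr (_ + _); last first.
  apply: eq_bigr => -[j /= lt_jn] _.
  rewrite expr1n mulr1 -!exprM -mulrA -exprD qbinomial_exponent_hi //.
  by rewrite exprD mulrCA.
rewrite (reindex_inj rev_ord_inj); apply: eq_bigr => -[j /= lt_jn] _.
rewrite subSS expr1n mulr1 -!exprM -mulrA -exprD qbinomial_exponent_lo //.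
by rewrite exprD mulrCA.
Qed.

End JacobiTripleProduct.

Lemma qbinom_fpoly s m k L N : (k <= m)%N ->
  (N <= s * (m - k).+1)%N -> (N <= s * k.+1)%N -> (N <= s * L.+1)%N ->
  qbinom 'X^s m k * fpoly s L = 1 %[mod 'X^N].
Proof.
move=> le_km leN_mk leN_k leN_L.
apply: (@eqmodX_trans _ _ _ (qbinom 'X^s m k * fpoly s k)).
  exact: eqmodXM (eqmodX_refl _ _) (fpoly_eqmod leN_L leN_k).
have -> : fpoly s k = \prod_(i < k) (1 - 'X^s ^+ i.+1).
  by apply: eq_bigr => i _; rewrite (oppr_pchar2 pchar2_polyF2) -exprM.
rewrite qbinom_qfact; apply: (@eqmodX_trans _ _ _ (\prod_(i < k) 1)).
  apply: eqmodX_prod => -[i /= lt_ik]; rewrite (oppr_pchar2 pchar2_polyF2) -exprM.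
  by apply: eqmodX_1Xn; apply: leq_trans leN_mk _; rewrite leq_mul2l; lia.
by rewrite big1_eq eqmodX_refl.
Qed.

Lemma jacobi_prod_eqmod s n L N : (1 < s)%N -> (N <= n)%N -> (N <= L)%N ->
  jacobi_prod s n * fpoly s L = jacobi_sum s n %[mod 'X^N].
Proof.
move=> s_gt1 leNn leNL; have s_gt0 := ltnW s_gt1.
have le_s x : (x <= s * x)%N by rewrite leq_pmull.
have leNsL : (N <= s * L.+1)%N by have := le_s L.+1; lia.
have le_em j : (j <= s * 'C(j, 2) + (s - 1) * j)%N.
  by rewrite (leq_trans _ (leq_addl _ _)) // leq_pmull // subn_gt0.
apply: (@eqmodX_trans _ _ _ (\sum_(j < n.+1) 'X^(s * 'C(j, 2) + (s - 1) * j) +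
                             \sum_(j < n) 'X^(s * 'C(j.+1, 2) + j.+1))); last first.
  rewrite big_ord_recr /= addrAC /jacobi_sum big_split /= -[X in eqmodX _ _ X]addr0.
  apply: eqmodXD; first exact: eqmodX_refl.
  exact: eqmodX_Xn0 (leq_trans leNn (le_em n)).
rewrite jacobi_prod_qbinomial // mulrDl !mulr_suml.
apply: eqmodXD; apply: eqmodX_sum => -[j /= lt_j]; rewrite mulrAC mulrC.
  have := le_em j; move: (s * 'C(j, 2) + (s - 1) * j)%N => e le_je.
  rewrite -[X in eqmodX _ _ X]mulr1; apply: eqmodX_mulXn; apply: qbinom_fpoly.
  - lia.
  - have := le_s (n + n - (n - j)).+1; lia.
  - have := le_s (n - j).+1; lia.
  - lia.
have : (j < s * 'C(j.+1, 2) + j.+1)%N by rewrite ltn_addl.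
move: (s * 'C(j.+1, 2) + j.+1)%N => e lt_je.
rewrite -[X in eqmodX _ _ X]mulr1; apply: eqmodX_mulXn; apply: qbinom_fpoly.
- lia.
- have := le_s (n + n - (n.+1 + j)).+1; lia.
- have := le_s (n.+1 + j).+1; lia.
- lia.
Qed.

Lemma fpoly1_jacobi3 n : fpoly 1 (3 * n) = jacobi_prod 3 n * fpoly 3 n.
Proof.
rewrite /fpoly (big_ord_mul _ 3 n (fun j => 1 + 'X^(1 * j.+1))).
rewrite /jacobi_prod -!big_split.
apply: eq_bigr => i _ /=; rewrite !big_ord_recr big_ord0 /= mul1r !mul1n.
have -> : (3 * i + 0).+1 = (3 * i + 1)%N by lia.
have -> : (3 * i + 1).+1 = (3 * i + (3 - 1))%N by lia.
by have -> : (3 * i + 2).+1 = (3 * i.+1)%N by lia.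
Qed.

Lemma fpoly1_jacobi4 n : fpoly 1 (4 * n) = jacobi_prod 4 n * fpoly 2 (2 * n).
Proof.
rewrite /fpoly (big_ord_mul _ 4 n (fun j => 1 + 'X^(1 * j.+1))).
rewrite (big_ord_mul _ 2 n (fun j => 1 + 'X^(2 * j.+1))) /jacobi_prod -!big_split.
apply: eq_bigr => i _ /=; rewrite !big_ord_recr !big_ord0 /= !mul1r !mul1n.
have -> : (4 * i + 0).+1 = (4 * i + 1)%N by lia.
have -> : (4 * i + 1).+1 = (2 * (2 * i + 0).+1)%N by lia.
have -> : (4 * i + 2).+1 = (4 * i + (4 - 1))%N by lia.
have -> : (4 * i + 3).+1 = (2 * (2 * i + 1).+1)%N by lia.
by rewrite mulrACA !mulrA.
Qed.

Definition tri_sum (L : nat) : {poly 'F_2} := \sum_(k < L) 'X^'C(k.+1, 2).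

Lemma jacobi_sum4E n : jacobi_sum 4 n = tri_sum (2 * n).
Proof.
rewrite /tri_sum (big_ord_mul _ 2 n (fun k => 'X^'C(k.+1, 2))); apply: eq_bigr => i _.
rewrite !big_ord_recr big_ord0 /= add0r.
have -> : 'C((2 * i + 0).+1, 2) = (4 * 'C(i, 2) + (4 - 1) * i)%N.
  by have := double_bin2 i; have := double_bin2 (2 * i + 0).+1; nia.
have -> : 'C((2 * i + 1).+1, 2) = (4 * 'C(i.+1, 2) + i.+1)%N.
  by have := double_bin2 i.+1; have := double_bin2 (2 * i + 1).+1; nia.
by [].
Qed.

Lemma tri_sum3E n :
  tri_sum (3 * n) = jacobi_sum 3 n \Po 'X^3 + 'X * (tri_sum n \Po 'X^9).
Proof.
rewrite /tri_sum (big_ord_mul _ 3 n (fun k => 'X^'C(k.+1, 2))) !rmorph_sum mulr_sumr.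
rewrite -big_split; apply: eq_bigr => i _.
rewrite !big_ord_recr big_ord0 /= add0r rmorphD /= !comp_Xn_poly -!exprM -exprS.
have -> : 'C((3 * i + 0).+1, 2) = (3 * (3 * 'C(i, 2) + (3 - 1) * i))%N.
  by have := double_bin2 i; have := double_bin2 (3 * i + 0).+1; nia.
have -> : 'C((3 * i + 1).+1, 2) = (9 * 'C(i.+1, 2)).+1.
  by have := double_bin2 i.+1; have := double_bin2 (3 * i + 1).+1; nia.
have -> : 'C((3 * i + 2).+1, 2) = (3 * (3 * 'C(i.+1, 2) + i.+1))%N.
  by have := double_bin2 i.+1; have := double_bin2 (3 * i + 2).+1; nia.
by rewrite addrAC.
Qed.

Lemma tri_sum_eqmod L L' N : (N <= L)%N -> (N <= L')%N ->
  tri_sum L = tri_sum L' %[mod 'X^N].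
Proof.
wlog le_LL' : L L' / (L <= L')%N.
  move=> wlog_LL' leNL leNL'.
  have [/wlog_LL'|/ltnW/wlog_LL' ] := leqP L L'; first exact.
  by move=> /(_ leNL' leNL); apply: eqmodX_sym.
move=> leNL _; rewrite -(subnKC le_LL'); elim: (L' - L)%N => [|d IHd].
  by rewrite addn0 eqmodX_refl.
rewrite addnS [tri_sum _.+1]/tri_sum big_ord_recr /= -[tri_sum L]addr0.
apply: eqmodXD IHd _; apply/eqmodX_sym/eqmodX_Xn0.
by rewrite binS bin1; lia.
Qed.

Lemma euler_pentagonal_eqmod M n N : (N <= M.+1)%N -> (N <= n)%N ->
  fpoly 1 M = jacobi_sum 3 n %[mod 'X^N].
Proof.
move=> leNM leNn; apply: (@eqmodX_trans _ _ _ (fpoly 1 (3 * n))).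
  by apply: fpoly_eqmod; lia.
by rewrite fpoly1_jacobi3; apply: jacobi_prod_eqmod.
Qed.

Lemma jacobi_cube_eqmod M L N : (N <= M.+1)%N -> (N <= L)%N ->
  fpoly 1 M ^+ 3 = tri_sum L %[mod 'X^N].
Proof.
move=> leNM leNL; apply: (@eqmodX_trans _ _ _ (tri_sum (2 * N))); last first.
  by apply: tri_sum_eqmod; lia.
rewrite -jacobi_sum4E exprS fpoly_sqr.
apply: (@eqmodX_trans _ _ _ (fpoly 1 (4 * N) * fpoly 2 (2 * N))).
  by apply: eqmodXM; apply: fpoly_eqmod; lia.
rewrite fpoly1_jacobi4 -mulrA -expr2 fpoly_sqr.
by apply: jacobi_prod_eqmod => //; rewrite leq_pmull.
Qed.

Lemma fpoly_cube_eqmod M N : (N <= M.+1)%N ->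
  fpoly 1 M ^+ 3 = fpoly 3 M + 'X * fpoly 9 M ^+ 3 %[mod 'X^N].
Proof.
move=> leNM; apply: (@eqmodX_trans _ _ _ (tri_sum (3 * N))).
  by apply: jacobi_cube_eqmod; lia.
have -> : fpoly 3 M = fpoly 1 M \Po 'X^3 by rewrite fpoly_comp.
have -> : fpoly 9 M ^+ 3 = (fpoly 1 M ^+ 3) \Po 'X^9 by rewrite rmorphXn /= fpoly_comp.
rewrite tri_sum3E; apply: eqmodXD.
  apply: eqmodX_le (eqmodX_comp _ (eqmodX_sym (euler_pentagonal_eqmod leNM _))) => //.
  exact: leq_pmull.
apply: (@eqmodX_mulXn _ _ 1).
apply: eqmodX_le (eqmodX_comp _ (eqmodX_sym (jacobi_cube_eqmod leNM _))) => //.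
by rewrite leq_subLR; lia.
Qed.

Lemma b2_34_gf_eqmod K :
  fpoly 3 K * fpoly 4 K * finvpoly 1 K * finvpoly 12 K =
  finvpoly 1 K \Po 'X^6 + 'X * ((fpoly 3 K ^+ 3 * finvpoly 1 K ^+ 3) \Po 'X^3)
    %[mod 'X^K.+1].
Proof.
have f4 : fpoly 4 K = fpoly 1 K ^+ 4 by rewrite (exprM _ 2 2) !fpoly_sqr.
have g12 : finvpoly 12 K = finvpoly 3 K ^+ 4 by rewrite (exprM _ 2 2) !finvpoly_sqr.
have -> : fpoly 3 K * fpoly 4 K * finvpoly 1 K * finvpoly 12 K =
          fpoly 1 K ^+ 3 * finvpoly 3 K ^+ 3 *
          ((fpoly 1 K * finvpoly 1 K) * (fpoly 3 K * finvpoly 3 K)).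
  by rewrite f4 g12; ring.
apply: (@eqmodX_trans _ _ _ (fpoly 1 K ^+ 3 * finvpoly 3 K ^+ 3 * (1 * 1))).
  by apply: eqmodXM (eqmodX_refl _ _) _; apply: eqmodXM; apply: fpoly_finvpoly.
rewrite mulr1 mulr1.
apply: (@eqmodX_trans _ _ _ ((fpoly 3 K + 'X * fpoly 9 K ^+ 3) * finvpoly 3 K ^+ 3)).
  exact: eqmodXM (fpoly_cube_eqmod _) (eqmodX_refl _ _).
rewrite mulrDl; apply: eqmodXD.
  have -> : finvpoly 1 K \Po 'X^6 = finvpoly 3 K ^+ 2.
    by rewrite finvpoly_sqr finvpoly_comp.
  rewrite exprS mulrA -[X in eqmodX _ _ X]mul1r.
  exact: eqmodXM (fpoly_finvpoly _ _) (eqmodX_refl _ _).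
rewrite -mulrA rmorphM !rmorphXn /= !fpoly_comp !finvpoly_comp.
exact: eqmodX_refl.
Qed.

Lemma b2_34_F2 K : ((b2_34 K)%:~R : 'F_2) =
  ((fpoly 3 K * fpoly 4 K * finvpoly 1 K * finvpoly 12 K) \Po 'X^2)`_K.
Proof.
rewrite -sqr_polyF2 /b2_34 -coef_map !rmorphM /= !map_f_trunc !map_finv_trunc.
by apply: (congr1 (fun p : {poly _} => p`_K)); ring.
Qed.

Lemma b3_3_F2 n : ((b3_3 n)%:~R : 'F_2) = (fpoly 3 n ^+ 3 * finvpoly 1 n ^+ 3)`_n.
Proof. by rewrite /b3_3 -coef_map rmorphM !rmorphXn /= map_f_trunc map_finv_trunc. Qed.

Lemma partp_F2 n : ((partp n)%:~R : 'F_2) = (finvpoly 1 n)`_n.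
Proof. by rewrite /partp -coef_map map_finv_trunc. Qed.

Lemma b2_34_double_F2 m : ((b2_34 (2 * m))%:~R : 'F_2) =
  (finvpoly 1 (2 * m) \Po 'X^6 +
   'X * ((fpoly 3 (2 * m) ^+ 3 * finvpoly 1 (2 * m) ^+ 3) \Po 'X^3))`_m.
Proof.
rewrite b2_34_F2 coef_comp_poly_Xn // dvdn_mulr // mulKn //.
by apply: eqmodX_coef (b2_34_gf_eqmod _) _; lia.
Qed.

Lemma b2_34_6n4_F2 n : ((b2_34 (6 * n + 4))%:~R : 'F_2) = 0.
Proof.
have -> : (6 * n + 4 = 2 * (3 * n + 2))%N by lia.
rewrite b2_34_double_F2 coefD coefXM !coef_comp_poly_Xn //.
have -> : (6 %| 3 * n + 2)%N = false by lia.
have -> : (3 %| (3 * n + 2).-1)%N = false by lia.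
by rewrite add0r if_same.
Qed.

Lemma b2_34_6n2_F2 n : ((b2_34 (6 * n + 2))%:~R : 'F_2) = (b3_3 n)%:~R.
Proof.
have -> : (6 * n + 2 = 2 * (3 * n + 1))%N by lia.
rewrite b2_34_double_F2 b3_3_F2 coefD coefXM !coef_comp_poly_Xn //.
have -> : (6 %| 3 * n + 1)%N = false by lia.
rewrite add0r addn1 /= dvdn_mulr // mulKn //.
apply: (@eqmodX_coef _ n.+1) => //.
by apply: eqmodXM; apply: eqmodXX; [apply: fpoly_eqmod | apply: finvpoly_eqmod]; lia.
Qed.

Lemma b2_34_12n6_F2 n : ((b2_34 (12 * n + 6))%:~R : 'F_2) = 0.
Proof.
have -> : (12 * n + 6 = 2 * (6 * n + 3))%N by lia.
rewrite b2_34_double_F2 coefD coefXM !coef_comp_poly_Xn //.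
have -> : (6 %| 6 * n + 3)%N = false by lia.
have -> : (3 %| (6 * n + 3).-1)%N = false by lia.
by rewrite add0r if_same.
Qed.

Lemma b2_34_12n_F2 n : (0 < n)%N -> ((b2_34 (12 * n))%:~R : 'F_2) = (partp n)%:~R.
Proof.
move=> n_gt0; have -> : (12 * n = 2 * (6 * n))%N by lia.
rewrite b2_34_double_F2 partp_F2 coefD coefXM !coef_comp_poly_Xn //.
rewrite dvdn_mulr // mulKn //.
have -> : (6 * n == 0)%N = false by lia.
have -> : (3 %| (6 * n).-1)%N = false by lia.
rewrite addr0; apply: (@eqmodX_coef _ n.+1) => //.
by apply: finvpoly_eqmod; lia.
Qed.

Lemma eqz_mod2_F2 (a b : int) : (a = b %[mod 2])%Z <-> (a%:~R = b%:~R :> 'F_2).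
Proof.
have := dvdz_pcharf (pchar_Fp (isT : prime 2)) (a - b).
rewrite -eqz_mod_dvd rmorphB subr_eq0 => eq_ab.
by split=> /eqP; [rewrite eq_ab | rewrite -eq_ab] => /eqP.
Qed.

Theorem mainTheorem5 (n : nat) : (0 < n)%N ->
  [/\ (b2_34 (6 * n + 4) = 0 %[mod 2])%Z,
      (b2_34 (6 * n + 2) = b3_3 n %[mod 2])%Z,
      (b2_34 (12 * n + 6) = 0 %[mod 2])%Z
    & (b2_34 (12 * n) = partp n %[mod 2])%Z].
Proof.
move=> n_gt0; split; apply/eqz_mod2_F2.
- by rewrite b2_34_6n4_F2.
- exact: b2_34_6n2_F2.
- by rewrite b2_34_12n6_F2.
- exact: b2_34_12n_F2.
Qed.
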